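(* Let $\Gamma$ be a group and $\rho_i:\Gamma\to GL(V_i)$, $i=1,2$, representations on finite-dimensional complex vector spaces. Assume that (1) each $V_i$ is an irreducible $\Gamma$-module with respect to $\rho_i$; (2) the Zariski-closure of $\rho_1(\Gamma)$ in $GL(V_1)$ is connected; (3) $\rho_2(\Gamma)$ is finite. Then $V_1\otimes V_2$ is an irreducible $\Gamma$-module with respect to $\rho_1\otimes\rho_2$. *)

(* The complex field C is modelled as R[i] = complex R
   (mathcomp-real-closed) for R : realType (MathComp-Analysis), i.e. R is the
   (unique up to isomorphism) complete archimedean ordered field of reals. *)
From HB Require Import structures.
From mathcomp Require Import all_boot all_order all_algebra.
From mathcomp Require Import reals.
From mathcomp Require Export complex mxtens.
Set Implicit Arguments. Unset Strict Implicit. Unset Printing Implicit Defensive.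
Import GRing.Theory Num.Theory.
Local Open Scope ring_scope.

Definition is_group (G : Type) (mul : G -> G -> G) (one : G) (inv : G -> G) : Prop :=
  [/\ forall x y z, mul x (mul y z) = mul (mul x y) z,
      forall x, mul one x = x,
      forall x, mul x one = x,
      forall x, mul (inv x) x = one
    & forall x, mul x (inv x) = one].

Definition is_rep (F : fieldType) (G : Type) (mul : G -> G -> G) (one : G)
  (n : nat) (rho : G -> 'M[F]_n) : Prop :=
  [/\ forall g, rho g \in unitmx,
      rho one = 1%:M
    & forall g h, rho (mul g h) = rho g *m rho h].

(* Subspaces are encoded by row spaces of square matrices (mxalgebra), with
   matrices acting on row vectors, as in mathcomp's mxrepresentation. *)
Definition rep_irreducible (F : fieldType) (G : Type) (n : nat)
  (rho : G -> 'M[F]_n) : Prop :=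
  (0 < n)%N /\
  forall U : 'M[F]_n, (forall g, (U *m rho g <= U)%MS) -> U == 0 \/ row_full U.

Definition tens_rep (F : fieldType) (G : Type) (n1 n2 : nat)
  (rho1 : G -> 'M[F]_n1) (rho2 : G -> 'M[F]_n2) : G -> 'M[F]_(n1 * n2) :=
  fun g => rho1 g *t rho2 g.

Inductive mxpoly_expr (F : Type) (n : nat) : Type :=
| PVar of 'I_n & 'I_n
| PConst of F
| PAdd of mxpoly_expr F n & mxpoly_expr F n
| PMul of mxpoly_expr F n & mxpoly_expr F n.

Fixpoint peval (F : fieldType) (n : nat) (A : 'M[F]_n) (p : mxpoly_expr F n) : F :=
  match p with
  | PVar i j => A i j
  | PConst c => c
  | PAdd p q => peval A p + peval A q
  | PMul p q => peval A p * peval A q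
  end.

(* Zariski-closed subsets of GL_n(F): common zero loci in GL_n(F) of families
   of polynomials in the entries (regular functions on GL_n are f / det^k, and
   f/det^k vanishes exactly where f does on GL_n). *)
Definition zariski_closed_GL (F : fieldType) (n : nat) (Z : 'M[F]_n -> Prop) : Prop :=
  exists S : mxpoly_expr F n -> Prop,
    forall A, Z A <-> (A \in unitmx /\ forall p, S p -> peval A p = 0).

Definition zariski_closure_GL (F : fieldType) (n : nat) (H : 'M[F]_n -> Prop)
  : 'M[F]_n -> Prop :=
  fun A => A \in unitmx /\
    forall Z, zariski_closed_GL Z -> (forall B, H B -> Z B) -> Z A.

Definition zariski_connected_GL (F : fieldType) (n : nat) (Y : 'M[F]_n -> Prop) : Prop :=
  forall Z1 Z2, zariski_closed_GL Z1 -> zariski_closed_GL Z2 ->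
    (forall A, Y A -> Z1 A \/ Z2 A) ->
    (forall A, Y A -> Z1 A -> Z2 A -> False) ->
    (forall A, Y A -> Z1 A) \/ (forall A, Y A -> Z2 A).

Definition rep_image (F : fieldType) (G : Type) (n : nat) (rho : G -> 'M[F]_n)
  : 'M[F]_n -> Prop := fun A => exists g, A = rho g.

(* Let H be the kernel of rho2; it has finite index and acts on V1 (x) V2 by
   rho1 (x) 1.

   rho1 stays irreducible on H: if U is H-stable, every translate U rho1(g) is
   one of finitely many U rho1(f_i), so the Zariski closure of rho1(Gamma) lies
   in the union of the closed sets {A | U A <= U rho1(f_i)}.  The translates
   different from U give a closed set disjoint from {A | U A <= U} (a unit A
   with U A <= U fixes U), so connectedness puts the closure inside
   {A | U A <= U} and U is Gamma-stable.

   A nonzero Gamma-stable W then contains some V1 (x) u: write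
   V1 (x) V2 = (+)_j V1 (x) e_j and pick x in W of minimal support S.  On the
   part M of W supported in S the j0-component is injective (minimality), and
   onto V1 (irreducibility under H).  Composing its inverse with the other
   components gives H-equivariant endomorphisms of V1, i.e. scalars u_j by
   Schur, so V1 (x) u lies in M.

   Finally {w | V1 (x) w <= W} is a Gamma-stable subspace of V2 containing u,
   hence all of V2. *)

From HB Require Import structures.
From mathcomp Require Import all_boot all_order all_algebra.
From mathcomp Require Import reals complex mxtens.
From Stdlib Require Import Classical ClassicalEpsilon Wf_nat.
Set Implicit Arguments. Unset Strict Implicit. Unset Printing Implicit Defensive.
Import GRing.Theory Num.Theory.
Local Open Scope ring_scope.

Lemma ex_min_measure (T : Type) (P : T -> Prop) (mu : T -> nat) :
  (exists x, P x) -> exists x, P x /\ forall y, P y -> (mu x <= mu y)%N.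
Proof.
case=> x Px.
have [|m [[[y [Py <-]] y_min] _]] :=
  dec_inh_nat_subset_has_unique_least_element
    (fun m => exists y, P y /\ mu y = m) (fun m => classic _).
  by exists (mu x), x.
by exists y; split=> // z Pz; apply/leP/y_min; exists z.
Qed.

Section ZariskiClosedSets.
Variables (F : fieldType) (n : nat).
Implicit Types Z : 'M[F]_n -> Prop.

Lemma zariski_closed_GL_ext Z Z' :
  zariski_closed_GL Z -> (forall A, Z A <-> Z' A) -> zariski_closed_GL Z'.
Proof. by move=> [S defZ] eqZ; exists S => A; rewrite -eqZ. Qed.

Lemma zariski_closed_GL0 : zariski_closed_GL (fun _ : 'M[F]_n => False).
Proof.
exists (fun p => p = PConst n 1) => A; split=> [[]|[_ /(_ _ erefl)/eqP]] //=.
by rewrite oner_eq0.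
Qed.

Lemma zariski_closed_GLU Z1 Z2 :
  zariski_closed_GL Z1 -> zariski_closed_GL Z2 ->
  zariski_closed_GL (fun A => Z1 A \/ Z2 A).
Proof.
move=> [S1 defZ1] [S2 defZ2].
exists (fun p => exists p1 p2, [/\ S1 p1, S2 p2 & p = PMul p1 p2]) => A.
rewrite defZ1 defZ2; split.
- case=> -[unitA Z0]; split=> // _ [p1 [p2 [S1p1 S2p2 ->]]] /=.
    by rewrite Z0 ?mul0r.
  by rewrite (Z0 p2) ?mulr0.
- case=> unitA Z0.
  case: (classic (exists2 p1, S1 p1 & peval A p1 != 0)) => [[p1 S1p1 p1A_neq0]|Z1A].
    right; split=> // p2 S2p2.
    have /eqP := Z0 (PMul p1 p2) (ex_intro _ p1 (ex_intro _ p2 (And3 S1p1 S2p2 erefl))).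
    by rewrite /= mulf_eq0 (negbTE p1A_neq0) => /eqP.
  left; split=> // p1 S1p1; apply/eqP/negPn/negP => p1A_neq0.
  by apply: Z1A; exists p1.
Qed.

Lemma zariski_closed_GL_bigcup (I : finType) (P : pred I) (Z : I -> 'M[F]_n -> Prop) :
  (forall i, P i -> zariski_closed_GL (Z i)) ->
  zariski_closed_GL (fun A => exists2 i, P i & Z i A).
Proof.
move=> closedZ.
suff closed_s (s : seq I) : {subset s <= P} ->
    zariski_closed_GL (fun A => exists2 i, i \in s & Z i A).
  have sub_enum : {subset enum P <= P} by move=> i; rewrite mem_enum.
  apply: zariski_closed_GL_ext (closed_s _ sub_enum) _ => A.
  by split=> [] [i Pi Zi]; exists i; rewrite ?mem_enum in Pi *.
elim: s => [|i s IHs] sub_sP.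
  by apply: zariski_closed_GL_ext zariski_closed_GL0 _ => A; split=> // -[].
have sub_s : {subset s <= P} by move=> j sj; apply: sub_sP; rewrite inE sj orbT.
have Pi : P i by apply: sub_sP; rewrite inE eqxx.
apply: zariski_closed_GL_ext (zariski_closed_GLU (closedZ i Pi) (IHs sub_s)) _ => A.
split=> [[Zi|[j sj Zj]]|[j]]; first by exists i; rewrite ?inE ?eqxx.
  by exists j; rewrite ?inE ?sj ?orbT.
by rewrite inE => /orP[/eqP->|sj] Zj; [left|right; exists j].
Qed.

Definition transporter_GL m p (U : 'M[F]_(m, n)) (W : 'M[F]_(p, n)) (A : 'M[F]_n) :=
  A \in unitmx /\ (U *m A <= W)%MS.

Definition pexpr_sum (p : 'I_n -> mxpoly_expr F n) :=
  foldr (fun k q => PAdd (p k) q) (PConst n 0) (index_enum 'I_n).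

Lemma peval_sum A p : peval A (pexpr_sum p) = \sum_k peval A (p k).
Proof.
rewrite /pexpr_sum unlock; elim: (index_enum _) => [|k s IHs] //=.
by rewrite IHs.
Qed.

Lemma zariski_closed_transporter m p (U : 'M[F]_(m, n)) (W : 'M[F]_(p, n)) :
  zariski_closed_GL (transporter_GL U W).
Proof.
(* U A <= W iff U A (cokermx W) = 0, polynomial equations in the entries of A. *)
pose K := cokermx W.
pose e i l := pexpr_sum (fun k =>
  PMul (pexpr_sum (fun j => PMul (PConst n (U i j)) (PVar F j k))) (PConst n (K k l))).
have eE A i l : peval A (e i l) = (U *m A *m K) i l.
  rewrite peval_sum [RHS]mxE; apply: eq_bigr => k _ /=; congr (_ * _).
  by rewrite peval_sum [RHS]mxE.
exists (fun q => exists i l, q = e i l) => A; rewrite /transporter_GL submxE.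
split=> -[unitA]; [move/eqP=> UAK0 | move=> e0]; split=> //.
  by move=> _ [i [l ->]]; rewrite eE UAK0 mxE.
by apply/eqP/matrixP=> i l; rewrite -eE mxE e0 //; exists i, l.
Qed.

End ZariskiClosedSets.

Section Representations.
Variables (F : fieldType) (G : Type) (mul : G -> G -> G) (one : G) (inv : G -> G).
Variables (n : nat) (rho : G -> 'M[F]_n).
Hypotheses (grp : is_group mul one inv) (rep : is_rep mul one rho).

Lemma rep_mulVg g : rho (inv g) *m rho g = 1%:M.
Proof.
have [_ _ _ mulVg _] := grp; have [_ rho_one rhoM] := rep.
by rewrite -rhoM mulVg rho_one.
Qed.

Lemma rep_eq_mulgV1 g h : rho g = rho h -> rho (mul g (inv h)) = 1%:M.
Proof.
have [_ _ _ _ mulgV] := grp; have [_ rho_one rhoM] := rep.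
by move=> eq_gh; rewrite rhoM eq_gh -rhoM mulgV rho_one.
Qed.

Lemma rep_closure_image g : zariski_closure_GL (rep_image rho) (rho g).
Proof. by split=> [|Z _ imZ]; [case: rep | apply: imZ; exists g]. Qed.

End Representations.

Lemma finite_image_cover (G : Type) (T : eqType) (g0 : G) (f : G -> T) (s : seq T) :
  (forall g, f g \in s) -> exists k (h : 'I_k -> G), forall g, exists i, f (h i) = f g.
Proof.
move=> f_s.
exists (size s), (fun i => epsilon (inhabits g0) (fun g => f g = nth (f g0) s i)).
move=> g; have idx_lt : (index (f g) s < size s)%N by rewrite index_mem.
exists (Ordinal idx_lt) => /=.
have : exists h, f h = nth (f g0) s (index (f g) s) by exists g; rewrite nth_index.
by move/(epsilon_spec (inhabits g0)) ->; rewrite nth_index.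
Qed.

Lemma unit_transport_submx (F : fieldType) m p n
    (U : 'M[F]_(m, n)) (W : 'M[F]_(p, n)) (A : 'M[F]_n) :
  A \in unitmx -> (U *m A <= U)%MS -> (U *m A <= W)%MS -> \rank W = \rank U ->
  (W <= U)%MS.
Proof.
move=> unitA sUA_U sUA_W rankW.
have sU_UA : (U <= U *m A)%MS.
  by rewrite -(mxrank_leqif_sup sUA_U).2 mxrankMfree ?row_free_unit.
by rewrite -(mxrank_leqif_sup (submx_trans sU_UA sUA_W)).2 rankW.
Qed.

Lemma irreducible_on_kernel (F : fieldType) (G : Type) (mul : G -> G -> G) (one : G)
    (inv : G -> G) n1 n2 (rho1 : G -> 'M[F]_n1) (rho2 : G -> 'M[F]_n2)
    k (f : 'I_k -> G) :
  is_group mul one inv -> is_rep mul one rho1 -> is_rep mul one rho2 ->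
  rep_irreducible rho1 ->
  zariski_connected_GL (zariski_closure_GL (rep_image rho1)) ->
  (forall g, exists i, rho2 (f i) = rho2 g) ->
  rep_irreducible (fun h : {g | rho2 g = 1%:M} => rho1 (sval h)).
Proof.
move=> grp rep1 rep2 [n1_gt0 irr1] conn cover; split=> // U stabU.
apply: irr1 => g; have [unit1 rho1_one rho1M] := rep1.
pose W i := U *m rho1 (f i).
have sUW h : exists i, (U *m rho1 h <= W i)%MS.
  have [i /esym/(rep_eq_mulgV1 grp rep2) ker_hfi] := cover h.
  have [mulgA _ mulg1 mulVg _] := grp.
  exists i; rewrite -[h]mulg1 -(mulVg (f i)) mulgA rho1M mulmxA submxMr //.
  exact: (stabU (exist _ _ ker_hfi)).
pose Z2 A := exists2 i, ~~ (W i <= U)%MS & transporter_GL U (W i) A.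
have closed_Z2 : zariski_closed_GL Z2.
  by apply: zariski_closed_GL_bigcup => i _; apply: zariski_closed_transporter.
have disjoint A : transporter_GL U U A -> Z2 A -> False.
  move=> [unitA sUA_U] [i /negP sWU [_ sUA_W]]; apply: sWU.
  apply: (unit_transport_submx unitA sUA_U sUA_W).
  by rewrite mxrankMfree ?row_free_unit.
have cover_closure A :
    zariski_closure_GL (rep_image rho1) A -> transporter_GL U U A \/ Z2 A.
  case=> _ /(_ (fun B => transporter_GL U U B \/ Z2 B)); apply.
    exact: zariski_closed_GLU (zariski_closed_transporter U U) closed_Z2.
  move=> _ [h ->]; have [i sUhW] := sUW h.
  case: (boolP (W i <= U)%MS) => sWU; [left | right; exists i => //]; split=> //.
  exact: submx_trans sUhW sWU.
have [] := conn _ _ (zariski_closed_transporter U U) closed_Z2 cover_closure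
  (fun A _ => disjoint A) => [closure_U | closure_Z2].
  by case: (closure_U _ (rep_closure_image rep1 g)).
have one_U : transporter_GL U U (rho1 one).
  by rewrite /transporter_GL rho1_one unitmx1 mulmx1.
by case: (disjoint _ one_U (closure_Z2 _ (rep_closure_image rep1 one))).
Qed.

Section TensorSlices.
Variables (F : fieldType) (n1 n2 : nat).

Definition tens_slice (j : 'I_n2) : 'M[F]_(n1 * n2, n1) :=
  \matrix_(k, a) (k == mxtens_index (a, j))%:R.

Definition tens_supp (x : 'rV[F]_(n1 * n2)) := [set j | x *m tens_slice j != 0].

Lemma mul_tens_slice m (x : 'M[F]_(m, n1 * n2)) j r a :
  (x *m tens_slice j) r a = x r (mxtens_index (a, j)).
Proof.
rewrite mxE (bigD1 (mxtens_index (a, j))) //= big1 => [|k /negbTE k_neq].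
  by rewrite mxE eqxx mulr1 addr0.
by rewrite mxE k_neq mulr0.
Qed.

Lemma tens_slice_inj m (x y : 'M[F]_(m, n1 * n2)) :
  (forall j, x *m tens_slice j = y *m tens_slice j) -> x = y.
Proof.
move=> eq_xy; apply/matrixP => r k; case: (mxtens_indexP k) => a j.
have := congr1 (fun M : 'M_(m, n1) => M r a) (eq_xy j).
by rewrite /= !mul_tens_slice.
Qed.

Lemma tensmx_rowE (v : 'rV[F]_n1) (w : 'rV[F]_n2) a b :
  (v *t w) 0 (mxtens_index (a, b)) = v 0 a * w 0 b.
Proof. by rewrite -tensmxE; congr (_ _ _); apply: val_inj. Qed.

Lemma tensmx_slice (v : 'rV[F]_n1) (w : 'rV[F]_n2) j :
  (v *t w) *m tens_slice j = w 0 j *: v.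
Proof. by apply/rowP => a; rewrite mul_tens_slice tensmx_rowE !mxE mulrC. Qed.

Lemma tensmx1_slice (A : 'M[F]_n1) j :
  (A *t 1%:M) *m tens_slice j = tens_slice j *m A.
Proof.
apply/matrixP => k a; case: (mxtens_indexP k) => i b.
rewrite mul_tens_slice tensmxE [RHS]mxE (bigD1 i) //= big1 => [|c /negbTE c_neq_i].
  rewrite !mxE (inj_eq (can_inj (@mxtens_indexK _ _))) xpair_eqE eqxx /=.
  by rewrite addr0 mulrC.
rewrite mxE (inj_eq (can_inj (@mxtens_indexK _ _))) xpair_eqE eq_sym c_neq_i.
by rewrite mul0r.
Qed.

Lemma tensmx_delta (a : 'I_n1) (b : 'I_n2) :
  (delta_mx 0 a : 'rV[F]_n1) *t (delta_mx 0 b : 'rV[F]_n2) =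
  delta_mx 0 (mxtens_index (a, b)).
Proof.
apply/rowP => k; case: (mxtens_indexP k) => c d.
rewrite tensmx_rowE !mxE (inj_eq (can_inj (@mxtens_indexK _ _))) xpair_eqE.
by rewrite eqxx -natrM mulnb.
Qed.

Lemma tensmx_mulmxr k (v : 'rV[F]_n1) (c : 'rV[F]_k) (B : 'M[F]_(k, n2)) :
  v *t (c *m B) = c *m \matrix_i (v *t row i B).
Proof.
apply/rowP => l; case: (mxtens_indexP l) => a b.
rewrite tensmx_rowE !mxE mulr_sumr; apply: eq_bigr => i _.
by rewrite [X in _ = _ * X]mxE tensmx_rowE mxE mulrCA.
Qed.

End TensorSlices.

Arguments tens_slice {F n1 n2} j.
Arguments tens_supp {F n1 n2} x.

Lemma irreducible_commute_scalar (F : closedFieldType) (I : Type) n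
    (A : I -> 'M[F]_n) (P : 'M[F]_n) :
  rep_irreducible A -> (forall i, P *m A i = A i *m P) -> exists c, P = c%:M.
Proof.
case=> n_gt0 irrA commPA.
have [c] : exists c, root (char_poly P) c.
  by apply/closed_rootP; rewrite size_char_poly eqSS -lt0n.
rewrite -eigenvalue_root_char /eigenvalue => eigen_c.
exists c; case: (irrA (eigenspace P c)) => [i | eigen0 | /submx_full eigen_full].
- apply/eigenspaceP; rewrite -mulmxA -commPA mulmxA.
  by move/eigenspaceP: (submx_refl (eigenspace P c)) => ->; rewrite scalemxAl.
- by rewrite eigen0 in eigen_c.
- by move/eigenspaceP: (eigen_full _ 1%:M); rewrite mul1mx scalemx1.
Qed.

Section SliceSupport.
Variables (F : closedFieldType) (I : Type) (n1 n2 : nat).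
Variables (A : I -> 'M[F]_n1) (W : 'M[F]_(n1 * n2)).
Hypothesis irrA : rep_irreducible A.
Hypothesis stabW : forall i, (W *m (A i *t 1%:M) <= W)%MS.

Variables (x : 'rV[F]_(n1 * n2)) (j0 : 'I_n2).
Hypotheses (xW : (x <= W)%MS) (j0_supp : j0 \in tens_supp x).
Hypothesis x_min :
  forall y, (y <= W)%MS -> y != 0 -> (#|tens_supp x| <= #|tens_supp y|)%N.

Let M := (W :&: \bigcap_(j | j \notin tens_supp x) kermx (tens_slice j))%MS.

Lemma sub_slice_space m (y : 'M[F]_(m, n1 * n2)) :
  (y <= M)%MS <->
  (y <= W)%MS /\ forall j, j \notin tens_supp x -> y *m tens_slice j = 0.
Proof.
rewrite sub_capmx; split=> [/andP[yW /sub_bigcapmxP yker] | [yW y0]].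
  by split=> // j /yker; rewrite sub_kermx => /eqP.
by rewrite yW; apply/sub_bigcapmxP => j /y0 yj0; rewrite sub_kermx yj0.
Qed.

Lemma slice_space_stable i : (M *m (A i *t 1%:M) <= M)%MS.
Proof.
have [MW M0] := (sub_slice_space M).1 (submx_refl M).
apply/sub_slice_space; split; first exact: submx_trans (submxMr _ MW) (stabW i).
by move=> j /M0 Mj0; rewrite -mulmxA tensmx1_slice mulmxA Mj0 mul0mx.
Qed.

Lemma slice_space_inj m (y : 'M[F]_(m, n1 * n2)) :
  (y <= M)%MS -> y *m tens_slice j0 = 0 -> y = 0.
Proof.
move=> yM yj0; apply/row_matrixP => r; rewrite row0.
have [zW z0] := (sub_slice_space (row r y)).1 (submx_trans (row_sub r y) yM).
apply/eqP/negPn/negP => z_neq0.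
have supp_z : tens_supp (row r y) \subset tens_supp x :\ j0.
  apply/subsetP => j; rewrite inE in_setD1 => zj_neq0; apply/andP; split.
    by apply: contraNneq zj_neq0 => ->; rewrite -row_mul yj0 row0.
  by apply: contraNT zj_neq0 => /z0 ->; rewrite eqxx.
have := leq_trans (x_min zW z_neq0) (subset_leq_card supp_z).
by rewrite (cardsD1 j0) j0_supp add1n ltnn.
Qed.

Lemma slice_space_full : row_full (M *m tens_slice j0).
Proof.
have xM : (x <= M)%MS.
  by apply/sub_slice_space; split=> // j; rewrite inE negbK => /eqP.
case: irrA => _ /(_ <<M *m tens_slice j0>>%MS) [i | | ].
- rewrite (eqmxMr _ (genmxE _)) genmxE -mulmxA -tensmx1_slice mulmxA.
  exact: submxMr (slice_space_stable i).
- rewrite -submx0 genmxE => M0; move: j0_supp.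
  by rewrite inE -submx0 (submx_trans (submxMr _ xM) M0).
- by rewrite /row_full genmxE.
Qed.

Lemma slice_space_split :
  exists2 L : 'M[F]_(n1, n1 * n2), L *m tens_slice j0 = 1%:M & (L <= M)%MS.
Proof.
exists (pinvmx (M *m tens_slice j0) *m M); last exact: submxMl.
by rewrite -mulmxA mulVpmx // slice_space_full.
Qed.

Variable L : 'M[F]_(n1, n1 * n2).
Hypotheses (L_slice : L *m tens_slice j0 = 1%:M) (L_sub : (L <= M)%MS).

Lemma slice_space_eq m (y : 'M[F]_(m, n1 * n2)) :
  (y <= M)%MS -> y = y *m tens_slice j0 *m L.
Proof.
move=> yM; apply/eqP; rewrite -subr_eq0; apply/eqP/slice_space_inj.
  by rewrite addmx_sub // eqmx_opp mulmx_sub // L_sub.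
by rewrite mulmxBl -!mulmxA L_slice mulmx1 subrr.
Qed.

Lemma L_slice_commute j i :
  L *m tens_slice j *m A i = A i *m (L *m tens_slice j).
Proof.
have LAM : (L *m (A i *t 1%:M) <= M)%MS.
  exact: submx_trans (submxMr _ L_sub) (slice_space_stable i).
have LA_slice : L *m (A i *t 1%:M) *m tens_slice j0 = A i.
  by rewrite -mulmxA tensmx1_slice mulmxA L_slice mul1mx.
rewrite -mulmxA -tensmx1_slice [LHS]mulmxA (slice_space_eq LAM) LA_slice.
by rewrite mulmxA.
Qed.

Lemma min_support_contains_slice :
  exists2 u : 'rV[F]_n2, u != 0 & forall v : 'rV[F]_n1, (v *t u <= W)%MS.
Proof.
have [n1_gt0 _] := irrA; pose i0 := Ordinal n1_gt0.
pose u := \row_j (L *m tens_slice j) i0 i0.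
have L_slice_scalar j : L *m tens_slice j = (u 0 j)%:M.
  have [c Lc] := irreducible_commute_scalar irrA (L_slice_commute j).
  by rewrite /u mxE Lc mxE eqxx.
exists u.
  apply/eqP => u0; have := L_slice_scalar j0.
  rewrite L_slice u0 mxE => /matrixP/(_ i0 i0)/eqP.
  by rewrite !mxE eqxx oner_eq0.
move=> v; suff -> : v *t u = v *m L.
  have [LW _] := (sub_slice_space L).1 L_sub.
  exact: submx_trans (submxMl _ _) LW.
apply: tens_slice_inj => j.
by rewrite tensmx_slice -mulmxA L_slice_scalar mul_mx_scalar.
Qed.

End SliceSupport.

Lemma tens_stable_contains_slice (F : closedFieldType) (I : Type) n1 n2
    (A : I -> 'M[F]_n1) (W : 'M[F]_(n1 * n2)) :
  rep_irreducible A -> (forall i, (W *m (A i *t 1%:M) <= W)%MS) -> W != 0 ->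
  exists2 u : 'rV[F]_n2, u != 0 & forall v : 'rV[F]_n1, (v *t u <= W)%MS.
Proof.
move=> irrA stabW /rowV0Pn[y0 y0W y0_neq0].
have [x [[xW x_neq0] x_min]] :=
  @ex_min_measure _ (fun y : 'rV[F]_(n1 * n2) => (y <= W)%MS /\ y != 0)
    (fun y => #|tens_supp y|)
    (ex_intro _ y0 (conj y0W y0_neq0)).
have /set0Pn[j0 j0_supp] : tens_supp x != set0.
  apply: contraNneq x_neq0 => supp0; apply/eqP/tens_slice_inj => j.
  by move/setP/(_ j): supp0; rewrite !inE mul0mx => /negbFE/eqP.
have [L L_slice L_sub] := slice_space_split irrA stabW xW j0_supp.
apply: (min_support_contains_slice irrA stabW j0_supp _ L_slice L_sub).
by move=> y yW y_neq0; apply: x_min.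
Qed.

Lemma orbit_span_full (F : fieldType) (G : Type) (mul : G -> G -> G) (one : G)
    n (rho : G -> 'M[F]_n) k (f : 'I_k -> G) (u : 'rV[F]_n) :
  is_rep mul one rho -> rep_irreducible rho ->
  (forall g, exists i, rho (f i) = rho g) -> u != 0 ->
  row_full (\matrix_i (u *m rho (f i))).
Proof.
move=> [_ rho_one rhoM] [_ irr] cover u_neq0.
set B := \matrix_i (u *m rho (f i)).
have B_row i : row i B = u *m rho (f i) by rewrite rowK.
case: (irr <<B>>%MS) => [g | | ]; last by rewrite /row_full genmxE.
  rewrite (eqmxMr _ (genmxE _)) genmxE; apply/row_subP => i.
  rewrite row_mul B_row -mulmxA -rhoM.
  by have [j <-] := cover (mul (f i) g); rewrite -B_row row_sub.
rewrite -submx0 genmxE => /row_subP B0; case/negP: u_neq0.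
have [i0 rho_fi0] := cover one.
by have := B0 i0; rewrite B_row rho_fi0 rho_one mulmx1 submx0.
Qed.

Lemma tens_stable_full (F : fieldType) (G : Type) (mul : G -> G -> G) (one : G)
    (inv : G -> G) n1 n2 (rho1 : G -> 'M[F]_n1) (rho2 : G -> 'M[F]_n2)
    k (f : 'I_k -> G) (W : 'M[F]_(n1 * n2)) (u : 'rV[F]_n2) :
  is_group mul one inv -> is_rep mul one rho1 -> is_rep mul one rho2 ->
  rep_irreducible rho2 -> (forall g, exists i, rho2 (f i) = rho2 g) ->
  (forall g, (W *m tens_rep rho1 rho2 g <= W)%MS) ->
  u != 0 -> (forall v : 'rV[F]_n1, (v *t u <= W)%MS) -> row_full W.
Proof.
move=> grp rep1 rep2 irr2 cover stabW u_neq0 uW.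
have orbitW (v : 'rV[F]_n1) h : (v *t (u *m rho2 h) <= W)%MS.
  have -> : v *t (u *m rho2 h) = (v *m rho1 (inv h) *t u) *m tens_rep rho1 rho2 h.
    by rewrite /tens_rep tensmx_mul -mulmxA (rep_mulVg grp rep1) mulmx1.
  exact: submx_trans (submxMr _ (uW _)) (stabW h).
have tensW (v : 'rV[F]_n1) (w : 'rV[F]_n2) : (v *t w <= W)%MS.
  have /submxP[c ->] := submx_full w (orbit_span_full rep2 irr2 cover u_neq0).
  rewrite tensmx_mulmxr; apply: submx_trans (submxMl _ _) _.
  by apply/row_subP => i; rewrite !rowK; apply: orbitW.
rewrite -sub1mx; apply/row_subP => l; case: (mxtens_indexP l) => a b.
by rewrite row1 -tensmx_delta.
Qed.

Theorem lemma4 (R : realType) (G : Type) (mul : G -> G -> G) (one : G) (inv : G -> G)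
  (n1 n2 : nat) (rho1 : G -> 'M[R[i]]_n1) (rho2 : G -> 'M[R[i]]_n2) :
  is_group mul one inv ->
  is_rep mul one rho1 -> is_rep mul one rho2 ->
  rep_irreducible rho1 -> rep_irreducible rho2 ->
  zariski_connected_GL (zariski_closure_GL (rep_image rho1)) ->
  (exists s : seq 'M[R[i]]_n2, forall g, rho2 g \in s) ->
  rep_irreducible (tens_rep rho1 rho2).
Proof.
move=> grp rep1 rep2 irr1 irr2 conn [s fin].
have [k [f cover]] := finite_image_cover one fin.
have irr_ker := irreducible_on_kernel grp rep1 rep2 irr1 conn cover.
have [[n1_gt0 _] [n2_gt0 _]] := (irr1, irr2).
split=> [|W stabW]; first by rewrite muln_gt0 n1_gt0 n2_gt0.
have [-> | W_neq0] := eqVneq W 0; [by left | right].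
have stabW_ker (h : {g | rho2 g = 1%:M}) : (W *m (rho1 (sval h) *t 1%:M) <= W)%MS.
  by case: h => h /= rho2h; rewrite -rho2h; exact: stabW.
have [u u_neq0 uW] := tens_stable_contains_slice irr_ker stabW_ker W_neq0.
exact: tens_stable_full grp rep1 rep2 irr2 cover stabW u_neq0 uW.
Qed.
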